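(* Let $(X,d)$ be a nonempty homogeneous compact metric space of diameter $D$, and let $m$ be a Borel probability measure on $X$ that is invariant under all isometries of $X$. Let $A=\int_{X\times X} d(x,y)\,d(m\times m)(x,y)$ and let $\mu = 1-(m\times m)(\Delta)$, where $\Delta=\{(x,x):x\in X\}$ is the diagonal. Then $$\frac{D}{2}\le A\le \mu D.$$ Furthermore, $\mu=1$ if every point of $X$ has $m$-measure zero, and $\mu=1-\frac1n$ if $X$ is finite with $|X|=n$.
   Context: A metric space is homogeneous if its isometry group acts transitively on its points. The diameter is $D=\sup_{x,y\in X} d(x,y)$. *)

From HB Require Import structures.
From mathcomp Require Import all_boot all_order all_algebra.
From mathcomp Require Import all_classical all_reals all_analysis.
Set Implicit Arguments. Unset Strict Implicit. Unset Printing Implicit Defensive.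
Import Order.TTheory GRing.Theory Num.Theory.
Local Open Scope classical_set_scope.
Local Open Scope ring_scope.

Section MetricDefs.
Context {R : realType} {X : Type} (d : X -> X -> R).

Definition is_metric : Prop :=
  (forall x y, 0 <= d x y) /\
  (forall x y, d x y = 0 <-> x = y) /\
  (forall x y, d x y = d y x) /\
  (forall x y z, d x z <= d x y + d y z).

Definition dball (x : X) (r : R) : set X := [set y | d x y < r].
Definition dopen (U : set X) : Prop :=
  forall x, U x -> exists2 r : R, 0 < r & dball x r `<=` U.

Definition dcompact : Prop :=
  forall (I : Type) (U : I -> set X),
    (forall i, dopen (U i)) -> (forall x, exists i, U i x) ->
    exists (n : nat) (g : 'I_n -> I), forall x, exists k, U (g k) x.

Definition is_isometry (f : X -> X) : Prop :=
  (forall x y, d (f x) (f y) = d x y) /\ bijective f.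

Definition homogeneous : Prop :=
  forall x y, exists f, is_isometry f /\ f x = y.

Definition diameter : R := sup [set d z.1 z.2 | z in [set: X * X]].

End MetricDefs.

(* the diagonal of X x X is the library's classical_sets.diagonal *)

From HB Require Import structures.
From mathcomp Require Import all_boot all_order all_algebra.
From mathcomp Require Import all_classical all_reals all_analysis.
From mathcomp Require Import lra measurable_realfun.
Import Order.TTheory GRing.Theory Num.Theory.
Local Open Scope classical_set_scope.
Local Open Scope ring_scope.

(* The mean distance c(x) = \int d(x, y) dm(y) is unchanged by isometries,
   hence constant by homogeneity, and A = c by Tonelli.  Integrating the
   triangle inequality d(x, y) <= d(x, z) + d(z, y) in z gives
   d(x, y) <= 2 c, so D <= 2 A.  As d <= D off the diagonal and d = 0 on it,
   A <= D (m x m)(X^2 \ Delta).  By Tonelli (m x m)(Delta) is the integral of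
   x |-> m{x}, and all singletons have the same mass by homogeneity, namely
   1/n when |X| = n.  Compactness provides boundedness of d and, through
   finite nets, the measurability of d on the product sigma-algebra. *)

Section Probability.
Context {dT : measure_display} {T : measurableType dT} {R : realType}
  (P : probability T R).
Local Open Scope ereal_scope.

Lemma probability_integral_cst (r : \bar R) : \int[P]_x (cst r) x = r.
Proof.
rewrite integral_cst // [X in _ * X](_ : _ = 1) ?mule1 //.
exact: probability_setT.
Qed.

Lemma probability_set1_uniform n (f : 'I_n -> T) :
  bijective f -> (forall x : T, measurable [set x]) ->
  (forall x y, P [set x] = P [set y]) -> forall x, P [set x] = n%:R^-1%:E.
Proof.
move=> bf mset1 Pset1 x; have [g fK gK] := bf.
have covT : [set: T] = \big[setU/set0]_(i < n) [set f i].
  rewrite -bigcup_seq; apply/seteqP; split => // y _.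
  by exists (g y); [exact: mem_index_enum | rewrite /= gK].
have Pn : 1 = P [set x] *+ n.
  rewrite -(probability_setT P) covT measure_bigsetU_ord //; last first.
    by move=> i j _ _ [z [/= -> /(bij_inj bf)]].
  rewrite (eq_bigr (fun=> P [set x])) => [|i _]; last exact: Pset1.
  by rewrite sumr_const card_ord.
have Px_fin : P [set x] \is a fin_num by exact: fin_num_measure.
move: Pn; rewrite -(fineK Px_fin) -EFin_natmul => -[] /esym.
by rewrite -[(_ *+ n)%R]mulr_natl => /mulr1_eq ->.
Qed.

Lemma product_diagonalE : (P \x P) diagonal = \int[P]_x P [set x].
Proof.
apply: eq_integral => x _; congr (P _).
by apply/seteqP; split => y; rewrite /xsection /= in_setE /diagonal /= => ->.
Qed.

End Probability.

Section Metric.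
Context {R : realType} {X : Type} {d : X -> X -> R}.
Hypothesis dm : is_metric d.

Lemma metric_ge0 x y : 0 <= d x y. Proof. by case: dm. Qed.
Lemma metric_eq0 x y : d x y = 0 <-> x = y. Proof. by case: dm => _ []. Qed.
Lemma metricC x y : d x y = d y x. Proof. by case: dm => _ [_ []]. Qed.
Lemma metric_triangle x y z : d x z <= d x y + d y z.
Proof. by case: dm => _ [_ [_]]. Qed.
Lemma metricxx x : d x x = 0. Proof. exact/metric_eq0. Qed.

Lemma dopen_dball x r : dopen d (dball d x r).
Proof.
move=> y yx; exists (r - d x y); first by rewrite subr_gt0.
move=> z; rewrite /dball /= ltrBrDl => zy.
exact: le_lt_trans (metric_triangle x y z) zy.
Qed.

Lemma dopen_setC1 x : dopen d (~` [set x]).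
Proof.
move=> y /= yx; exists (d y x).
  by rewrite lt_neqAle metric_ge0 andbT eq_sym; apply/eqP => /metric_eq0.
by move=> z; rewrite /dball /= => + zx; rewrite zx ltxx.
Qed.

Lemma diameter_le (x0 : X) M : (forall x y, d x y <= M) -> diameter d <= M.
Proof.
by move=> dM; apply: ge_sup => [|_ [z _ <-]]; [exists (d x0 x0), (x0, x0)|].
Qed.

Hypothesis cpt : dcompact d.

Lemma dcompact_net r : 0 < r -> exists n (p : 'I_n -> X),
  forall x, exists i, d (p i) x < r.
Proof.
move=> r0; have cov x : exists y, dball d y r x.
  by exists x; rewrite /dball /= metricxx.
have [n [p pP]] := cpt _ _ (fun y => dopen_dball y r) cov.
by exists n, p.
Qed.

Lemma dcompact_bounded (x0 : X) : exists M, forall x y, d x y <= M.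
Proof.
have cov x : exists k : nat, dball d x0 k%:R x.
  exists (Num.Def.archi_bound (d x0 x)).
  by rewrite /dball /= archi_boundP // metric_ge0.
have [n [g gP]] := cpt _ _ (fun k : nat => dopen_dball x0 k%:R) cov.
pose N := \max_(k < n) g k.
have x0N x : d x0 x <= N%:R.
  have [k /= ltk] := gP x; apply/ltW/(lt_le_trans ltk).
  by rewrite ler_nat; exact: leq_bigmax.
exists (N%:R + N%:R) => x y; apply: le_trans (metric_triangle x x0 y) _.
by rewrite metricC lerD.
Qed.

Lemma le_diameter x y : d x y <= diameter d.
Proof.
have [M dM] := dcompact_bounded x.
apply: sup_upper_bound; last by exists (x, y).
by split; [exists (d x y), (x, y) | exists M => _ [z _ <-]].
Qed.

Lemma diameter_ge0 : 0 <= diameter d.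
Proof.
have [[x _]|X0] := pselect (exists x : X, True).
  exact: le_trans (metric_ge0 x x) (le_diameter x x).
rewrite /diameter (_ : [set _ | _ in _] = set0) ?sup0 //.
by apply/seteqP; split => // r [z _ _]; case: X0; exists z.1.
Qed.

End Metric.

Section Borel.
Context {R : realType} {dX : measure_display} {X : measurableType dX}
  {d : X -> X -> R}.
Hypothesis dm : is_metric d.
Hypothesis mE : @measurable _ X = <<s dopen d >>.

Lemma dopen_measurable U : dopen d U -> measurable U.
Proof. by move=> oU; rewrite mE; exact: sub_sigma_algebra. Qed.

Lemma measurable_dball x r : measurable (dball d x r).
Proof. exact/dopen_measurable/dopen_dball. Qed.

Lemma measurable_singleton (x : X) : measurable [set x].
Proof.
by rewrite -[[set x]]setCK; exact/measurableC/dopen_measurable/dopen_setC1.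
Qed.

Lemma isometry_measurable f : is_isometry d f -> measurable_fun [set: X] f.
Proof.
move=> [fd _]; apply: (@measurability _ _ X X setT f (dopen d) mE).
move=> _ [U oU <-]; rewrite setTI.
apply: dopen_measurable => x Ufx; have [r r0 rU] := oU (f x) Ufx.
by exists r => // y xy; apply: rU; rewrite /dball /= fd.
Qed.

Hypothesis cpt : dcompact d.

(* {d < r} is open in X * X, but the product sigma-algebra only sees countable
   unions of rectangles.  With the finite 1/(k+1)-nets p_k given by compactness,
   {d < r} is the union over k of the products of the 1/(k+1)-balls around the
   pairs of net points p_k i, p_k j with d (p_k i) (p_k j) < r - 2/(k+1). *)
Lemma measurable_dist_lt r : measurable [set z : X * X | d z.1 z.2 < r].
Proof.
pose e k : R := k.+1%:R^-1.
have /choice[net netP] : forall k, exists np : {n : nat & 'I_n -> X},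
    forall x, exists i, d (projT2 np i) x < e k.
  move=> k; have ek0 : 0 < e k by rewrite invr_gt0 ltr0Sn.
  have [n [p pP]] := dcompact_net dm cpt _ ek0.
  by exists (existT _ n p).
pose p k := projT2 (net k).
pose S k (ij : 'I_(projT1 (net k)) * 'I_(projT1 (net k))) : set (X * X) :=
  if d (p k ij.1) (p k ij.2) < r - (e k + e k)
  then dball d (p k ij.1) (e k) `*` dball d (p k ij.2) (e k) else set0.
suff -> : [set z : X * X | d z.1 z.2 < r] =
    \bigcup_k \bigcup_(ij in setT) S k ij.
  apply: bigcupT_measurable => k; apply: fin_bigcup_measurable => [|ij _].
    exact: finite_finset.
  by rewrite /S; case: ifP => _ //; apply: measurableX; exact: measurable_dball.
apply/seteqP; split => [[x y] /= xy|[x y] [k _ [ij _]]].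
- have [k ek] : exists k, e k < (r - d x y) / 4.
    have gap0 : 0 < (r - d x y) / 4 by apply: divr_gt0; lra.
    by have [k] := ltr_add_invr gap0; rewrite add0r; exists k.
  have [i xi] := netP k x; have [j yj] := netP k y.
  exists k => //; exists (i, j) => //; rewrite /S /=.
  have := metric_triangle dm (p k i) x (p k j).
  have := metric_triangle dm x y (p k j); rewrite (metricC dm (p k j) y) in yj.
  move=> t1 t2; have -> : d (p k i) (p k j) < r - (e k + e k) by lra.
  by split; rewrite /dball //= (metricC dm).
- rewrite /S; case: ifP => // pij [/= xi yj].
  have := metric_triangle dm x (p k ij.1) y.
  have := metric_triangle dm (p k ij.1) (p k ij.2) y.
  rewrite /dball /= (metricC dm) in xi; rewrite /dball /= in yj; lra.
Qed.

Lemma measurable_dist : measurable_fun [set: X * X] (fun z => d z.1 z.2).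
Proof.
apply: (@measurability _ _ _ R _ _ _ (@RGenInftyO.measurableE R)).
move=> _ [_ [r ->] <-].
rewrite setTI (_ : _ @^-1` _ = [set z : X * X | d z.1 z.2 < r]).
  exact: measurable_dist_lt.
by apply/seteqP; split => z; rewrite /= in_itv.
Qed.

Lemma measurable_dist1 x : measurable_fun [set: X] (d x).
Proof. exact: (measurableT_comp measurable_dist (pair1_measurable x)). Qed.

Lemma measurable_diagonal : measurable (@diagonal X).
Proof.
rewrite (_ : diagonal = (fun z => d z.1 z.2) @^-1` [set 0]).
  by rewrite -[_ @^-1` _]setTI; exact: measurable_dist.
apply/seteqP; split => z /=; last by move/(metric_eq0 dm).
by move=> ->; rewrite (metricxx dm).
Qed.

End Borel.

Section MeanDistance.
Context {R : realType} {dX : measure_display} {X : measurableType dX}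
  (d : X -> X -> R) (m : probability X R).
Hypothesis dm : is_metric d.
Hypothesis mE : @measurable _ X = <<s dopen d >>.
Hypothesis cpt : dcompact d.
Local Open Scope ereal_scope.

Let measurable_EFin_dist1 x : measurable_fun [set: X] (fun y => (d x y)%:E).
Proof. exact/measurable_EFinP/(measurable_dist1 dm mE cpt). Qed.

Let measurable_EFin_dist :
  measurable_fun [set: X * X] (fun z => (d z.1 z.2)%:E).
Proof. by apply: measurableT_comp => //; exact: measurable_dist dm mE cpt. Qed.

Definition mean_dist x := \int[m]_y (d x y)%:E.

Lemma mean_dist_ge0 x : 0 <= mean_dist x.
Proof. by apply: integral_ge0 => y _; rewrite lee_fin (metric_ge0 dm). Qed.

Lemma mean_dist_le_diameter x : mean_dist x <= (diameter d)%:E.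
Proof.
rewrite -[leRHS](probability_integral_cst m); apply: ge0_le_integral => //.
- by move=> y _; rewrite lee_fin (metric_ge0 dm).
- by move=> y _; rewrite lee_fin (le_diameter dm cpt).
Qed.

Lemma dist_le_mean_distD x y : (d x y)%:E <= mean_dist x + mean_dist y.
Proof.
rewrite /mean_dist -ge0_integralD //; last 2 first.
- by move=> z _; rewrite lee_fin (metric_ge0 dm).
- by move=> z _; rewrite lee_fin (metric_ge0 dm).
rewrite -[leLHS](probability_integral_cst m); apply: ge0_le_integral => //.
- by move=> z _; rewrite lee_fin (metric_ge0 dm).
- exact: emeasurable_funD.
- move=> z _ /=; rewrite -EFinD lee_fin (metricC dm y z).
  exact: metric_triangle dm x z y.
Qed.

Lemma integral_dist_le_diameter :
  \int[m \x m]_z (d z.1 z.2)%:E <= (1 - (m \x m) diagonal) * (diameter d)%:E.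
Proof.
have mdiag := measurable_diagonal dm mE cpt; have mCdiag := measurableC mdiag.
have mindic : measurable_fun [set: X * X]
    (fun z => (\1_(~` diagonal) z : R)%:E).
  by apply/measurable_EFinP; exact: measurable_indic.
apply: (@le_trans _ _
  (\int[m \x m]_z ((diameter d)%:E * (\1_(~` diagonal) z : R)%:E))).
  apply: ge0_le_integral => //.
  - by move=> z _; rewrite lee_fin (metric_ge0 dm).
  - exact: emeasurable_funM.
  move=> [x y] _; rewrite -EFinM lee_fin indicE.
  have [->|xy] := pselect (x = y).
    by rewrite (metricxx dm) mulr_ge0 ?(diameter_ge0 dm cpt).
  by rewrite (mem_set (xy : (~` diagonal) (x, y))) mulr1 (le_diameter dm cpt).
rewrite ge0_integralZl_EFin //; last exact: diameter_ge0 dm cpt.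
rewrite integral_indic // setIT muleC.
by rewrite [X in X * _ <= _](probability_setC _ mdiag).
Qed.

Hypothesis hom : homogeneous d.
Hypothesis minv : forall f : X -> X, is_isometry d f ->
  forall B : set X, measurable B -> m (f @^-1` B) = m B.

Lemma mean_dist_isometry f x : is_isometry d f -> mean_dist (f x) = mean_dist x.
Proof.
move=> fiso; have mf := isometry_measurable mE _ fiso.
transitivity (\int[m]_(y in f @^-1` setT) ((fun y => (d (f x) y)%:E) \o f) y).
  rewrite -(ge0_integral_pushforward mf m measurableT
    (measurable_EFin_dist1 _)).
    apply: eq_measure_integral => B mB _; exact/esym/minv.
  by move=> y _; rewrite lee_fin (metric_ge0 dm).
by rewrite preimage_setT; apply: eq_integral => y _ /=; case: fiso => ->.
Qed.

Lemma mean_dist_const x y : mean_dist x = mean_dist y.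
Proof. by have [f [fiso <-]] := hom y x; rewrite mean_dist_isometry. Qed.

Lemma integral_distE (x0 : X) : \int[m \x m]_z (d z.1 z.2)%:E = mean_dist x0.
Proof.
rewrite fubini_tonelli1 //; last by move=> z; rewrite lee_fin (metric_ge0 dm).
rewrite -[RHS](probability_integral_cst m).
by apply: eq_integral => x _; exact: mean_dist_const.
Qed.

Lemma half_diameter_le_integral_dist (x0 : X) :
  ((diameter d) / 2)%:E <= \int[m \x m]_z (d z.1 z.2)%:E.
Proof.
rewrite (integral_distE x0).
have c_fin : mean_dist x0 \is a fin_num.
  rewrite ge0_fin_numE ?mean_dist_ge0 //.
  exact: le_lt_trans (mean_dist_le_diameter x0) (ltry _).
rewrite -(fineK c_fin) lee_fin.
suff : (diameter d <= fine (mean_dist x0) + fine (mean_dist x0))%R by lra.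
apply: (diameter_le x0) => x y; rewrite -lee_fin EFinD fineK //.
rewrite -{1}(mean_dist_const x x0) -(mean_dist_const y x0).
exact: dist_le_mean_distD.
Qed.

Lemma singleton_measure_const (x y : X) : m [set x] = m [set y].
Proof.
have [f [fiso fx]] := hom x y.
rewrite -(minv _ fiso _ (measurable_singleton dm mE y)); congr (m _).
apply/seteqP; split => z /=; first by move->.
by move=> fz; apply: (bij_inj fiso.2); rewrite fz fx.
Qed.

End MeanDistance.

Local Open Scope ereal_scope.

Theorem theorem1p2 (R : realType) (dX : measure_display) (X : measurableType dX)
  (d : X -> X -> R) (m : probability X R) :
  is_metric d ->
  (* the measurable sets of X are exactly the Borel sets of the metric d *)
  @measurable _ X = <<s dopen d >> ->
  inhabited X ->
  homogeneous d ->
  dcompact d ->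
  (* m is invariant under all isometries *)
  (forall f : X -> X, is_isometry d f ->
     forall B : set X, measurable B -> m (f @^-1` B) = m B) ->
  let D := diameter d in
  let A := \int[m \x m]_z (d z.1 z.2)%:E in
  let mu := 1 - (m \x m) (@diagonal X) in
  [/\ (D / 2)%:E <= A, A <= mu * D%:E,
      (forall x : X, m [set x] = 0) -> mu = 1
    & forall (n : nat) (f : 'I_n -> X), bijective f ->
        mu = (1 - n%:R^-1)%:E].
Proof.
move=> dm mE [x0] hom cpt minv D A mu; split.
- exact: half_diameter_le_integral_dist.
- exact: integral_dist_le_diameter.
- by move=> m_set1; rewrite /mu product_diagonalE integral0_eq ?sube0.
- move=> n f bf; rewrite /mu product_diagonalE EFinB.
  rewrite -(probability_integral_cst m (n%:R^-1)%:E); congr (_ - _).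
  apply: eq_integral => x _ /=; apply: (probability_set1_uniform m _ _ bf).
    exact: measurable_singleton dm mE.
  exact: singleton_measure_const dm mE hom minv.
Qed.
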